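(* Let $A\in\mathbb{R}^{n\times n}$ be symmetric with rank $r$. (1) Consider the linear program in the variables $H^+,H^-\in\mathbb{R}^{n\times n}$: minimize $\sum_{i,j}(H^+_{ij}+H^-_{ij})$ subject to $A(H^+-H^-)A=A$, $H^+\ge 0$, $H^-\ge 0$. For every extreme point $(H^+,H^-)$ of its feasible region, the matrix $H:=H^+-H^-$ has at most $r^2$ nonzero entries. Moreover this bound is sharp: for all $n\ge r\ge 1$ there is a symmetric $n\times n$ matrix $A$ of rank $r$ for which some extreme solution $H$ of this linear program has exactly $r^2$ nonzero entries. (2) Consider the linear program in the variables $H^+,H^-$ ranging over symmetric $n\times n$ matrices: minimize $\sum_{i,j}(H^+_{ij}+H^-_{ij})$ subject to $A(H^+-H^-)A=A$, $H^+\ge 0$, $H^-\ge 0$ (this is the linear program for $\min\{\|H\|_1: AHA=A,\ H^\top=H\}$). For every extreme point $(H^+,H^-)$ of its feasible region, the matrix $H:=H^+-H^-$ has at most $r^2+r$ nonzero entries. Moreover this bound is sharp for $n-2\ge r\ge 3$: for such $n,r$ there is a symmetric $n\times n$ matrix $A$ of rank $r$ for which some extreme solution $H$ of this linear program has exactly $r^2+r$ nonzero entries.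
   Context: For a matrix $H$, $\|H\|_1=\sum_{i,j}|H_{ij}|$ (the entrywise 1-norm). Inequalities $H\ge 0$ are entrywise. *)

From HB Require Import structures.
From mathcomp Require Import all_boot all_order all_algebra.
From mathcomp Require Import reals.
Set Implicit Arguments. Unset Strict Implicit. Unset Printing Implicit Defensive.
Import Order.TTheory GRing.Theory Num.Theory.
Local Open Scope ring_scope.

Section Defs.
Variables (R : realType) (n : nat).

Definition feas_gen (A : 'M[R]_n) (P : 'M[R]_n * 'M[R]_n) : Prop :=
  A *m (P.1 - P.2) *m A = A /\ (forall i j, 0 <= P.1 i j) /\ (forall i j, 0 <= P.2 i j).

Definition feas_sym (A : 'M[R]_n) (P : 'M[R]_n * 'M[R]_n) : Prop :=
  feas_gen A P /\ P.1^T = P.1 /\ P.2^T = P.2.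

Definition extreme_point (S : 'M[R]_n * 'M[R]_n -> Prop) (x : 'M[R]_n * 'M[R]_n) : Prop :=
  S x /\ forall (y z : 'M[R]_n * 'M[R]_n) (t : R), S y -> S z -> 0 < t < 1 ->
    x = (t *: y.1 + (1 - t) *: z.1, t *: y.2 + (1 - t) *: z.2) -> y = z.

Definition nnz (H : 'M[R]_n) : nat := #|[set p : 'I_n * 'I_n | H p.1 p.2 != 0]|.

End Defs.

From HB Require Import structures.
From mathcomp Require Import all_boot all_order all_algebra.
From mathcomp Require Import reals.
From mathcomp Require Import ring lra zify.
Set Implicit Arguments. Unset Strict Implicit. Unset Printing Implicit Defensive.
Import Order.TTheory GRing.Theory Num.Theory.
Local Open Scope ring_scope.

(* Let r = rank A and A = C R a rank factorisation.  If the support of an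
   extreme point (H+, H-) had more than r^2 entries, a dimension count for the
   linear map X |-> R X C, restricted to matrices supported there, would give a
   nonzero D with that support and A D A = 0.  In the symmetric program one
   writes A = A^T = R^T C^T, uses the map X |-> C^T X C on symmetric X and
   counts each off-diagonal pair of the support once, so r^2 + r entries
   (r(r+1)/2 constraints) suffice to get a symmetric such D.  Splitting D
   along the supports of H+ and H- gives a feasible segment through
   (H+, H-), contradicting extremality.

   For sharpness, (H, 0) is extreme as soon as H >= 0 is the only feasible
   matrix supported inside the support of H.  In the general program take
   A = I_r - J_r / (r + 1) and H = I_r + J_r, J_r the all-ones r x r block,
   which is an inverse of A on that block.  In the symmetric program take H the
   adjacency matrix of the complete graph on r + 1 vertices and A = U S U^T,
   where U e_k = e_k + e_r (k < r) and S is the inverse of U^T H U = 3 J_r - I_r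
   on the block; a symmetric solution supported in the support of H has the
   same image under Y |-> U^T Y U, which determines it entrywise. *)

(** * Supported kernels *)

Section LinearDependence.
Variable F : fieldType.

Lemma exists_nontrivial_dependence (I : finType) (S : {set I}) d (v : I -> 'rV[F]_d) :
  (d < #|S|)%N -> exists c : I -> F,
    [/\ exists i, c i != 0, forall i, i \notin S -> c i = 0 & \sum_i c i *: v i = 0].
Proof.
move=> ltdS.
pose M : 'M[F]_(#|S|, d) := \matrix_(k < #|S|) v (enum_val k).
have /rowV0Pn[w] : kermx M != 0.
  apply: contraTneq ltdS => kerM0; rewrite -leqNgt.
  have := mxrank_ker M; rewrite kerM0 mxrank0 => /esym/eqP; rewrite subn_eq0.
  by move/leq_trans; apply; exact: rank_leq_col.
rewrite sub_kermx => /eqP wM /rV0Pn[k wk].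
exists (fun i => \sum_(k | enum_val k == i) w 0 k); split.
- exists (enum_val k); rewrite (big_pred1 k) // => k' /=; exact: (inj_eq enum_val_inj).
- by move=> i iS; apply: big1 => k' /eqP ek'; move: iS; rewrite -ek' enum_valP.
- rewrite -[RHS]wM mulmx_sum_row.
  under eq_bigr do rewrite scaler_suml.
  rewrite (exchange_big_dep xpredT) //=; apply: eq_bigr => k' _.
  by rewrite (big_pred1 (enum_val k')) ?rowK // => i; rewrite /= eq_sym.
Qed.

Lemma exists_combination_vanishing_on (I : finType) (S : {set I}) p q
    (T : {set 'I_p * 'I_q}) (M : I -> 'M[F]_(p, q)) :
  (#|T| < #|S|)%N -> exists c : I -> F,
    [/\ exists i, c i != 0, forall i, i \notin S -> c i = 0 &
        forall k, k \in T -> (\sum_i c i *: M i) k.1 k.2 = 0].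
Proof.
move=> ltTS.
have [c [c_nz c_S c_T]] := exists_nontrivial_dependence
  (fun i => \row_(k < #|T|) M i (enum_val k).1 (enum_val k).2) ltTS.
exists c; split => // k kT.
move/rowP: c_T => /(_ (enum_rank_in kT k)); rewrite summxE mxE => <-.
by rewrite summxE; apply: eq_bigr => i _; rewrite !mxE enum_rankK_in.
Qed.

End LinearDependence.

Lemma sum_delta_mx_conj (R : comPzRingType) m n p (M1 : 'M[R]_(m, n)) (M2 : 'M[R]_(n, p))
    (c : 'I_n * 'I_n -> R) :
  \sum_k c k *: (M1 *m delta_mx k.1 k.2 *m M2) = M1 *m \matrix_(i, j) c (i, j) *m M2.
Proof.
pose G i j := c (i, j) *: (M1 *m delta_mx i j *m M2).
rewrite (eq_bigr (fun k => G k.1 k.2)); last by case.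
rewrite -pair_bigA /= [\matrix_(i, j) _]matrix_sum_delta mulmx_sumr mulmx_suml.
apply: eq_bigr => i _; rewrite mulmx_sumr mulmx_suml; apply: eq_bigr => j _.
by rewrite mxE -scalemxAr -scalemxAl.
Qed.

Lemma sum_symmetrized_delta_mx_conj (R : comPzRingType) n r (M : 'M[R]_(n, r))
    (c : 'I_n * 'I_n -> R) :
  let C := \matrix_(i, j) c (i, j) in
  \sum_k c k *: (M^T *m (delta_mx k.1 k.2 + delta_mx k.2 k.1) *m M) = M^T *m (C + C^T) *m M.
Proof.
rewrite /= mulmxDr mulmxDl -sum_delta_mx_conj.
have -> : M^T *m (\matrix_(i, j) c (i, j))^T *m M = (M^T *m \matrix_(i, j) c (i, j) *m M)^T.
  by rewrite !trmx_mul trmxK mulmxA.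
rewrite -sum_delta_mx_conj linear_sum -big_split /=; apply: eq_bigr => k _.
by rewrite linearZ /= -scalerDr mulmxDr mulmxDl !trmx_mul trmxK trmx_delta mulmxA.
Qed.

Lemma exists_supported_kernel (F : fieldType) n p q (S : {set 'I_n * 'I_n})
    (M1 : 'M[F]_(p, n)) (M2 : 'M[F]_(n, q)) :
  (p * q < #|S|)%N -> exists D : 'M[F]_n,
    [/\ D != 0, M1 *m D *m M2 = 0 & forall i j, D i j != 0 -> (i, j) \in S].
Proof.
move=> ltS; have {}ltS : (#|[set: 'I_p * 'I_q]| < #|S|)%N.
  by rewrite cardsT card_prod !card_ord.
have [c [[k ck] c_S c_T]] :=
  exists_combination_vanishing_on (fun k => M1 *m delta_mx k.1 k.2 *m M2) ltS.
exists (\matrix_(i, j) c (i, j)); split.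
- by apply: contra_neq ck => /matrixP/(_ k.1 k.2); rewrite !mxE -surjective_pairing.
- apply/matrixP => i j; rewrite -sum_delta_mx_conj mxE.
  by rewrite (c_T (i, j)) ?inE.
- by move=> i j; rewrite mxE; apply: contraR => /c_S ->.
Qed.

Lemma card_sym_upper n (X : {set 'I_n * 'I_n}) :
    (forall k, ((k.2, k.1) \in X) = (k \in X)) ->
  (2 * #|[set k in X | (k.1 <= k.2)%N]| = #|X| + #|[set k in X | k.1 == k.2]|)%N.
Proof.
move=> X_sym; set U := [set k in X | _].
have swap_inj : injective (fun k : 'I_n * 'I_n => (k.2, k.1)) by move=> [a b] [c d] [-> ->].
have swapU : [set (k.2, k.1) | k in U] = [set k in X | (k.2 <= k.1)%N].
  apply/setP => -[a b]; rewrite !inE /=; apply/imsetP/andP => [[[c d]] |].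
    by rewrite inE => /andP[cdX dc] [-> ->]; rewrite -(X_sym (c, d)) in cdX; rewrite cdX.
  by move=> [abX ba]; exists (b, a); rewrite // inE -X_sym /= abX.
have := cardsUI U [set (k.2, k.1) | k in U]; rewrite card_imset // swapU.
have -> : U :|: [set k in X | (k.2 <= k.1)%N] = X.
  by apply/setP => k; rewrite !inE -andb_orr leq_total andbT.
have -> : U :&: [set k in X | (k.2 <= k.1)%N] = [set k in X | k.1 == k.2].
  by apply/setP => k; rewrite !inE andbACA andbb -eqn_leq.
by move=> ->; rewrite mul2n addnn.
Qed.

Lemma double_card_upper r :
  (2 * #|[set k in [set: 'I_r * 'I_r] | (k.1 <= k.2)%N]| = r * r + r)%N.
Proof.
have diag_inj : injective (fun i : 'I_r => (i, i)) by move=> i j [].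
have card_diag : #|[set k in [set: 'I_r * 'I_r] | k.1 == k.2]| = r.
  rewrite -[RHS]card_ord -cardsT -(card_imset _ diag_inj); apply: eq_card => -[a b].
  by rewrite !inE /=; apply/eqP/imsetP => [<-|[i _ [-> ->]] //]; exists a.
have setT_sym (k : 'I_r * 'I_r) : ((k.2, k.1) \in setT) = (k \in setT) by rewrite !inE.
by rewrite card_sym_upper // cardsT card_prod card_ord card_diag.
Qed.

Lemma exists_supported_sym_kernel (F : numFieldType) n r (S : {set 'I_n * 'I_n})
    (M : 'M[F]_(n, r)) :
    (forall k, ((k.2, k.1) \in S) = (k \in S)) -> (r * r + r < #|S|)%N ->
  exists D : 'M[F]_n,
    [/\ D^T = D, D != 0, M^T *m D *m M = 0 & forall i j, D i j != 0 -> (i, j) \in S].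
Proof.
move=> S_sym ltS; set U := [set k in S | (k.1 <= k.2)%N].
have lt_upper : (#|[set k in [set: 'I_r * 'I_r] | (k.1 <= k.2)%N]| < #|U|)%N.
  rewrite -(ltn_pmul2l (isT : (0 < 2)%N)) double_card_upper.
  by apply: leq_trans ltS _; rewrite (card_sym_upper S_sym) leq_addr.
have [c [[k ck] c_U c_T]] := exists_combination_vanishing_on
  (fun k => M^T *m (delta_mx k.1 k.2 + delta_mx k.2 k.1) *m M) lt_upper.
rewrite sum_symmetrized_delta_mx_conj in c_T.
set C := \matrix_(i, j) c (i, j) in c_T.
have inU l : c l != 0 -> l \in U by move=> cl; apply: contraR cl => /c_U ->.
have D_sym : (C + C^T)^T = C + C^T by rewrite linearD /= trmxK addrC.
(* C + C^T doubles the diagonal of C, hence characteristic 0. *)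
exists (C + C^T); split => //.
- move: (inU k ck); rewrite inE => /andP[_ le_k].
  apply: contra_neq ck => /matrixP/(_ k.1 k.2); rewrite !mxE -surjective_pairing.
  case: k le_k => a b /= le_ab; case: (eqVneq a b) => [<-|neq_ab].
    by move/eqP; rewrite -mulr2n mulrn_eq0 => /eqP.
  rewrite (c_U (b, a)) ?addr0 // inE negb_and /= orbC -ltnNge ltn_neqAle le_ab andbT.
  by rewrite neq_ab.
- set Z := M^T *m (C + C^T) *m M in c_T *.
  have Z_sym : Z^T = Z by rewrite /Z !trmx_mul trmxK D_sym mulmxA.
  apply/matrixP => a b; rewrite [RHS]mxE.
  have [le_ab|/ltnW le_ba] := leqP a b; first by apply: (c_T (a, b)); rewrite !inE.
  by rewrite -Z_sym mxE; apply: (c_T (b, a)); rewrite !inE.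
- move=> a b; rewrite !mxE; have inS l : c l != 0 -> l \in S.
    by move/inU; rewrite inE => /andP[].
  case: (eqVneq (c (a, b)) 0) => [->|/inS //]; rewrite add0r => /inS.
  by rewrite -(S_sym (a, b)).
Qed.

(** * Extreme points have small support *)

Lemma exists_pos_scale_le (R : realFieldType) (I : finType) (f g : I -> R) :
  (forall i, 0 <= g i) -> (forall i, f i != 0 -> g i != 0) ->
  exists2 e : R, 0 < e & forall i, e * `|f i| <= g i.
Proof.
move=> g_ge0 g_nz.
(* Terms with [g i = 0] have [f i = 0], so the junk value [x / 0 = 0] is harmless. *)
pose K := \sum_i `|f i| / g i.
have K_ge0 : 0 <= K by apply: sumr_ge0 => i _; rewrite divr_ge0.
exists (1 + K)^-1; first by rewrite invr_gt0; lra.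
move=> i; have [->|fi_nz] := eqVneq (f i) 0; first by rewrite normr0 mulr0.
have gi_gt0 : 0 < g i by rewrite lt_def g_ge0 andbT; exact: g_nz.
have : `|f i| / g i <= K.
  rewrite /K (bigD1 i) //= lerDl; apply: sumr_ge0 => j _; exact: divr_ge0.
rewrite ler_pdivrMr // => le_fK.
rewrite mulrC ler_pdivrMr; [nra | lra].
Qed.

Section Perturbation.
Variables (R : realFieldType) (n : nat).

Definition split_along (P1 D : 'M[R]_n) : 'M[R]_n * 'M[R]_n :=
  (\matrix_(i, j) if P1 i j != 0 then D i j else 0,
   \matrix_(i, j) if P1 i j != 0 then 0 else - D i j).

Lemma split_along_sub (P1 D : 'M[R]_n) : (split_along P1 D).1 - (split_along P1 D).2 = D.
Proof. by apply/matrixP => i j; rewrite !mxE; case: ifP; rewrite ?subr0 ?sub0r ?opprK. Qed.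

Lemma tr_split_along (P1 D : 'M[R]_n) : P1^T = P1 -> D^T = D ->
  (split_along P1 D).1^T = (split_along P1 D).1 /\ (split_along P1 D).2^T = (split_along P1 D).2.
Proof.
move=> /matrixP P1_sym /matrixP D_sym.
by split; apply/matrixP => i j; rewrite !mxE -[P1 j i]P1_sym -[D j i]D_sym !mxE.
Qed.

Lemma split_along_nonneg (P1 P2 D : 'M[R]_n) :
    (forall i j, 0 <= P1 i j) -> (forall i j, 0 <= P2 i j) ->
    (forall i j, D i j != 0 -> (P1 i j != 0) || (P2 i j != 0)) ->
  exists2 e : R, 0 < e & forall s, `|s| <= e -> forall i j,
    0 <= (P1 + s *: (split_along P1 D).1) i j /\ 0 <= (P2 + s *: (split_along P1 D).2) i j.
Proof.
move=> P1_ge0 P2_ge0 D_supp.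
pose rho i j := if P1 i j != 0 then P1 i j else P2 i j.
have rho_ge0 (k : 'I_n * 'I_n) : 0 <= rho k.1 k.2 by rewrite /rho; case: ifP.
have rho_nz (k : 'I_n * 'I_n) : D k.1 k.2 != 0 -> rho k.1 k.2 != 0.
  by move/D_supp; rewrite /rho; case: ifP => // ->.
have [e e_gt0 e_le] := exists_pos_scale_le rho_ge0 rho_nz.
exists e => // s s_le i j.
have shift x y : e * `|y| <= x -> 0 <= x + s * y.
  move=> le_x; have := ler_norm (- (s * y)); rewrite normrN normrM.
  have := ler_wpM2r (normr_ge0 y) s_le; lra.
have := e_le (i, j); rewrite /rho !mxE /=.
by case: ifP => _ le_rho; rewrite ?mulr0 ?addr0; split => //; apply: shift; rewrite ?normrN.
Qed.

End Perturbation.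

Section ExtremePoints.
Variables (R : realType) (n : nat) (A : 'M[R]_n).

Definition supp (P : 'M[R]_n * 'M[R]_n) : {set 'I_n * 'I_n} :=
  [set k | (P.1 k.1 k.2 != 0) || (P.2 k.1 k.2 != 0)].

Lemma nnz_sub_le_supp P : (nnz (P.1 - P.2) <= #|supp P|)%N.
Proof.
apply/subset_leq_card/subsetP => k; rewrite !inE !mxE; apply: contraLR.
by rewrite negb_or => /andP[/negPn/eqP-> /negPn/eqP->]; rewrite subrr eqxx.
Qed.

Lemma extreme_point_antipodal (S : 'M[R]_n * 'M[R]_n -> Prop) P Q1 Q2 :
  extreme_point S P -> S (P.1 + Q1, P.2 + Q2) -> S (P.1 - Q1, P.2 - Q2) ->
  Q1 = 0 /\ Q2 = 0.
Proof.
move=> [_ ext] S_plus S_minus.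
have half_gt0 : 0 < (2^-1 : R) < 1 by apply/andP; split; lra.
have [/matrixP e1 /matrixP e2] : (P.1 + Q1, P.2 + Q2) = (P.1 - Q1, P.2 - Q2).
  apply: ext S_plus S_minus half_gt0 _; rewrite {1}[P]surjective_pairing.
  by congr pair; apply/matrixP => i j; rewrite !mxE; lra.
by split; apply/matrixP => i j; [have := e1 i j | have := e2 i j]; rewrite !mxE; lra.
Qed.

Lemma extreme_point_split_along (S : 'M[R]_n * 'M[R]_n -> Prop) P D e :
  extreme_point S P -> 0 < e ->
  (forall s, `|s| <= e ->
     S (P.1 + s *: (split_along P.1 D).1, P.2 + s *: (split_along P.1 D).2)) ->
  D = 0.
Proof.
move=> ext e_gt0 S_shift.
have e_le : `|e| <= e by rewrite gtr0_norm.
have := S_shift (- e); rewrite normrN !scaleNr => /(_ e_le) S_minus.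
have [/eqP Q1 /eqP Q2] := extreme_point_antipodal ext (S_shift e e_le) S_minus.
move: Q1 Q2; rewrite !scaler_eq0 (gt_eqF e_gt0) !orFb => /eqP Q1 /eqP Q2.
by rewrite -(split_along_sub P.1 D) Q1 Q2 subr0.
Qed.

Lemma feas_gen_shift P Q1 Q2 :
    feas_gen A P -> A *m (Q1 - Q2) *m A = 0 ->
    (forall i j, 0 <= (P.1 + Q1) i j) -> (forall i j, 0 <= (P.2 + Q2) i j) ->
  feas_gen A (P.1 + Q1, P.2 + Q2).
Proof.
move=> [AHA _] AQA Q1_ge0 Q2_ge0; split=> //=.
by rewrite opprD addrACA mulmxDr mulmxDl AHA AQA addr0.
Qed.

Lemma feas_gen_split_along P D :
    feas_gen A P -> A *m D *m A = 0 -> (forall i j, D i j != 0 -> (i, j) \in supp P) ->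
  exists2 e : R, 0 < e & forall s, `|s| <= e ->
    feas_gen A (P.1 + s *: (split_along P.1 D).1, P.2 + s *: (split_along P.1 D).2).
Proof.
move=> feasP ADA D_supp; have [_ [P1_ge0 P2_ge0]] := feasP.
have D_supp' i j : D i j != 0 -> (P.1 i j != 0) || (P.2 i j != 0).
  by move/D_supp; rewrite inE.
have [e e_gt0 e_nonneg] := split_along_nonneg P1_ge0 P2_ge0 D_supp'.
exists e => // s s_le; apply: feas_gen_shift => //.
- by rewrite -scalerBr split_along_sub -scalemxAr -scalemxAl ADA scaler0.
- by move=> i j; case: (e_nonneg s s_le i j).
- by move=> i j; case: (e_nonneg s s_le i j).
Qed.

Lemma extreme_feas_gen_kernel P D :
    extreme_point (feas_gen A) P -> A *m D *m A = 0 ->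
    (forall i j, D i j != 0 -> (i, j) \in supp P) ->
  D = 0.
Proof.
move=> ext ADA D_supp; have [e e_gt0 feas] := feas_gen_split_along ext.1 ADA D_supp.
exact: extreme_point_split_along ext e_gt0 feas.
Qed.

Lemma extreme_feas_sym_kernel P D :
    extreme_point (feas_sym A) P -> D^T = D -> A *m D *m A = 0 ->
    (forall i j, D i j != 0 -> (i, j) \in supp P) ->
  D = 0.
Proof.
move=> ext D_sym ADA D_supp; have [[feasP [P1_sym P2_sym]] _] := ext.
have [e e_gt0 feas] := feas_gen_split_along feasP ADA D_supp.
have [Q1_sym Q2_sym] := tr_split_along P1_sym D_sym.
apply: extreme_point_split_along ext e_gt0 _ => s s_le; split; first exact: feas.
by split; rewrite /= linearD linearZ /= ?P1_sym ?P2_sym ?Q1_sym ?Q2_sym.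
Qed.

Lemma card_supp_extreme_feas_gen P :
  extreme_point (feas_gen A) P -> (#|supp P| <= \rank A ^ 2)%N.
Proof.
move=> ext; rewrite leqNgt -mulnn; apply/negP => lt_supp.
have [D [D_nz RDC D_supp]] := exists_supported_kernel (row_base A) (col_base A) lt_supp.
move/eqP: D_nz; apply; apply: extreme_feas_gen_kernel ext _ D_supp.
rewrite -[in LHS](mulmx_base A).
have -> : col_base A *m row_base A *m D *m (col_base A *m row_base A) =
          col_base A *m (row_base A *m D *m col_base A) *m row_base A by rewrite !mulmxA.
by rewrite RDC mulmx0 mul0mx.
Qed.

Lemma card_supp_extreme_feas_sym P : A^T = A ->
  extreme_point (feas_sym A) P -> (#|supp P| <= \rank A ^ 2 + \rank A)%N.
Proof.
move=> A_sym ext; have [[_ [/matrixP P1_sym /matrixP P2_sym]] _] := ext.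
have supp_sym k : ((k.2, k.1) \in supp P) = (k \in supp P).
  by rewrite !inE /= -[P.1 k.2 k.1]P1_sym -[P.2 k.2 k.1]P2_sym !mxE.
rewrite leqNgt -mulnn; apply/negP => lt_supp.
have [D [D_sym D_nz CDC D_supp]] := exists_supported_sym_kernel (col_base A) supp_sym lt_supp.
move/eqP: D_nz; apply; apply: extreme_feas_sym_kernel ext D_sym _ D_supp.
rewrite -[A in A *m D]A_sym -[in LHS](mulmx_base A) trmx_mul.
have -> : (row_base A)^T *m (col_base A)^T *m D *m (col_base A *m row_base A) =
          (row_base A)^T *m ((col_base A)^T *m D *m col_base A) *m row_base A by rewrite !mulmxA.
by rewrite CDC mulmx0 mul0mx.
Qed.

End ExtremePoints.

(** * Sharpness *)

Lemma convex_comb_eq0 (R : realDomainType) (a b t : R) :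
  0 <= a -> 0 <= b -> 0 < t < 1 -> t * a + (1 - t) * b = 0 -> a = 0 /\ b = 0.
Proof.
move=> a_ge0 b_ge0 /andP[t_gt0 t_lt1] /eqP.
rewrite paddr_eq0 ?mulr_ge0 ?subr_ge0 ?(ltW t_gt0) ?(ltW t_lt1) //.
by rewrite !mulf_eq0 (gt_eqF t_gt0) subr_eq0 (gt_eqF t_lt1) => /andP[/eqP-> /eqP->].
Qed.

Lemma extreme_point_of_unique_support (R : realType) n
    (S : 'M[R]_n * 'M[R]_n -> Prop) (H : 'M[R]_n) :
    (forall P, S P -> (forall i j, 0 <= P.1 i j) /\ (forall i j, 0 <= P.2 i j)) ->
    S (H, 0) ->
    (forall Y, S (Y, 0) -> (forall i j, H i j = 0 -> Y i j = 0) -> Y = H) ->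
  extreme_point S (H, 0).
Proof.
move=> S_nonneg SH H_unique; split=> // y z t Sy Sz t01 [/matrixP eH /matrixP e0].
have [[y1 y2] [z1 z2]] := (S_nonneg y Sy, S_nonneg z Sz).
have zero2 i j : y.2 i j = 0 /\ z.2 i j = 0.
  by apply: convex_comb_eq0 (y2 i j) (z2 i j) t01 _; have := e0 i j; rewrite !mxE.
have zero1 i j : H i j = 0 -> y.1 i j = 0 /\ z.1 i j = 0.
  move=> Hij; apply: convex_comb_eq0 (y1 i j) (z1 i j) t01 _.
  by have := eH i j; rewrite !mxE Hij.
have eq_H x : S x -> (forall i j, x.2 i j = 0) -> (forall i j, H i j = 0 -> x.1 i j = 0) ->
    x = (H, 0).
  case: x => x1 x2 /= Sx x2_0 x1_supp.
  have x2E : x2 = 0 by apply/matrixP => i j; rewrite x2_0 mxE.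
  by rewrite x2E in Sx *; congr pair; apply: H_unique.
have y_H : y = (H, 0) by apply: eq_H => // i j; [case: (zero2 i j) | case/zero1].
have z_H : z = (H, 0) by apply: eq_H => // i j; [case: (zero2 i j) | case/zero1].
by rewrite y_H z_H.
Qed.

Lemma mxrank_eq_pid (F : fieldType) n r (X Y : 'M[F]_n) :
  (r <= n)%N -> pid_mx r *m X = X -> X *m Y = pid_mx r -> \rank X = r.
Proof.
move=> le_rn pidX XY; apply/eqP; rewrite eqn_leq; apply/andP; split.
  by rewrite -pidX; apply: leq_trans (mxrankM_maxl _ _) _; rewrite rank_pid_mx.
by rewrite -{1}(rank_pid_mx F le_rn le_rn) -XY mxrankM_maxl.
Qed.

Lemma inner_inverse_unique (R : pzRingType) n (E X H Y : 'M[R]_n) :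
    X *m H = E -> H *m X = E -> E *m H = H ->
  E *m Y *m E = Y -> X *m Y *m X = X -> Y = H.
Proof.
move=> XH HX EH EYE XYX.
rewrite -EYE -{1}HX -XH.
have -> : H *m X *m Y *m (X *m H) = H *m (X *m Y *m X) *m H by rewrite !mulmxA.
by rewrite XYX HX EH.
Qed.

Lemma card_ord_lt n m : (m <= n)%N -> #|[set i : 'I_n | (i < m)%N]| = m.
Proof.
move=> le_mn; rewrite -sum1_card (eq_bigl (fun i : 'I_n => (i < m)%N)) => [|i]; last by rewrite inE.
by rewrite -(big_ord_widen n (fun _ => 1%N) le_mn) sum1_card card_ord.
Qed.

Lemma card_offdiag_block n m : (m <= n)%N ->
  #|[set k : 'I_n * 'I_n | [&& k.1 != k.2, (k.1 < m)%N & (k.2 < m)%N]]| = (m * m - m)%N.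
Proof.
move=> le_mn; set B := [set i : 'I_n | (i < m)%N].
have diag_inj : injective (fun i : 'I_n => (i, i)) by move=> i j [].
have -> : [set k : 'I_n * 'I_n | [&& k.1 != k.2, (k.1 < m)%N & (k.2 < m)%N]] =
          setX B B :\: [set k | k.1 == k.2].
  by apply/setP => -[i j]; rewrite !inE.
rewrite cardsD cardsX card_ord_lt //; congr (_ - _)%N.
rewrite -[RHS](card_ord_lt le_mn) -(card_imset B diag_inj); apply: eq_card => -[i j].
rewrite !inE /=; apply/andP/imsetP => [[/andP[iB _] /eqP <-]|[k kB [-> ->]]].
  by exists i; rewrite ?inE.
by rewrite inE in kB; rewrite kB eqxx.
Qed.

Section BlockMatrices.
Variables (R : comPzRingType) (n r : nat).

Definition ones_block : 'M[R]_n := \matrix_(i, j) ((i < r)%N && (j < r)%N)%:R.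

Lemma ones_blockE i j : ones_block i j = (i < r)%N%:R * (j < r)%N%:R.
Proof. by rewrite mxE -natrM mulnb. Qed.

Lemma tr_ones_block : ones_block^T = ones_block.
Proof. by apply/matrixP => i j; rewrite !mxE andbC. Qed.

Lemma pid_mulmxE (M : 'M[R]_n) i j : (pid_mx r *m M) i j = (i < r)%N%:R * M i j.
Proof.
rewrite mxE (bigD1 i) //= big1 ?addr0 => [|k /negPf ik]; rewrite mxE ?eqxx //.
by rewrite (inj_eq val_inj) eq_sym ik mul0r.
Qed.

Lemma mulmx_pidE (M : 'M[R]_n) i j : (M *m pid_mx r) i j = M i j * (j < r)%N%:R.
Proof.
rewrite mxE (bigD1 j) //= big1 ?addr0 => [|k /negPf kj]; rewrite mxE ?eqxx //.
by rewrite (inj_eq val_inj) kj mulr0.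
Qed.

Lemma pid_mx_idem : (pid_mx r : 'M[R]_n) *m (pid_mx r : 'M[R]_n) = pid_mx r.
Proof. by rewrite mul_pid_mx minnn pid_mx_minh. Qed.

Lemma pid_ones_block : pid_mx r *m ones_block = ones_block.
Proof.
apply/matrixP => i j; rewrite pid_mulmxE !ones_blockE.
by case: (i < r)%N; rewrite ?mul1r ?mul0r.
Qed.

Lemma ones_block_pid : ones_block *m pid_mx r = ones_block.
Proof.
apply/matrixP => i j; rewrite mulmx_pidE !ones_blockE.
by case: (j < r)%N; rewrite ?mulr1 ?mulr0.
Qed.

Lemma pid_mx_conj_id (Y : 'M[R]_n) :
  (forall i j, Y i j != 0 -> (i < r)%N && (j < r)%N) -> pid_mx r *m Y *m pid_mx r = Y.
Proof.
move=> Y_supp; apply/matrixP => i j; rewrite mulmx_pidE pid_mulmxE.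
have [->|/Y_supp/andP[-> ->]] := eqVneq (Y i j) 0; first by rewrite mulr0 mul0r.
by rewrite mul1r mulr1.
Qed.

Lemma ones_block_mul : (r <= n)%N -> ones_block *m ones_block = r%:R *: ones_block.
Proof.
move=> le_rn; have sum_lt : \sum_(k < n) (k < r)%N%:R = r%:R :> R.
  rewrite -[in RHS](card_ord r) -sumr_const (big_ord_widen n (fun _ => 1) le_rn).
  by rewrite [RHS]big_mkcond /=; apply: eq_bigr => k _; case: ifP.
apply/matrixP => i j; rewrite mxE [RHS]mxE -sum_lt big_distrl /=; apply: eq_bigr => k _.
rewrite !ones_blockE.
by case: (i < r)%N; case: (k < r)%N; case: (j < r)%N; rewrite ?mul0r ?mulr0 ?mul1r ?mulr1.
Qed.

End BlockMatrices.

Section OnesBlockExample.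
Variables (R : realType) (n r : nat).
Hypothesis le_rn : (r <= n)%N.

Local Notation E := (pid_mx r : 'M[R]_n).
Local Notation J := (ones_block R n r).
Let c : R := (r.+1%:R)^-1.
Let A := E - c *: J.
Let H := E + J.

Let c_r : c * r%:R = 1 - c.
Proof.
have r1_nz : r%:R + 1 != 0 :> R by rewrite natr1 pnatr_eq0.
by rewrite /c -natr1; field.
Qed.

Let AH : A *m H = E.
Proof.
rewrite mulmxBl !mulmxDr pid_mx_idem pid_ones_block -!scalemxAl ones_block_pid.
rewrite ones_block_mul // scalerA c_r scalerBl scale1r.
by rewrite [c *: J + _]addrC subrK addrK.
Qed.

Let HA : H *m A = E.
Proof.
rewrite mulmxDl !mulmxBr pid_mx_idem ones_block_pid -!scalemxAr pid_ones_block.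
by rewrite ones_block_mul // scalerA c_r scalerBl scale1r subKr subrK.
Qed.

Let EA : E *m A = A.
Proof. by rewrite mulmxBr pid_mx_idem -scalemxAr pid_ones_block. Qed.

Let H_supp i j : (H i j != 0) = (i < r)%N && (j < r)%N.
Proof.
rewrite !mxE -natrD pnatr_eq0 addn_eq0 !eqb0 negb_and !negbK.
by case: eqP => [/val_inj <-|_]; rewrite ?andbb ?orbb.
Qed.

Lemma feas_gen_bound_attained :
  exists A : 'M[R]_n, A^T = A /\ \rank A = r /\
    exists P, extreme_point (feas_gen A) P /\ nnz (P.1 - P.2) = (r ^ 2)%N.
Proof.
exists A; split; first by rewrite linearB /= tr_pid_mx linearZ /= tr_ones_block.
split; first exact: mxrank_eq_pid EA AH.
exists (H, 0); split; last first.
  rewrite /nnz subr0 -(card_ord_lt le_rn) -mulnn -cardsX; apply: eq_card => -[i j].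
  by rewrite !inE H_supp.
apply: extreme_point_of_unique_support.
- by move=> P [_ P_ge0].
- split; first by rewrite subr0 AH EA.
  by split=> i j; rewrite !mxE ?addr_ge0 ?ler0n.
move=> Y [AYA _] Y_supp; rewrite subr0 in AYA.
apply: (inner_inverse_unique AH HA) => //.
  by rewrite mulmxDr pid_mx_idem pid_ones_block.
by apply: pid_mx_conj_id => i j /(contra_neq (Y_supp i j)); rewrite H_supp.
Qed.

End OnesBlockExample.

Lemma sum_indicator_mull (R : pzSemiRingType) (I : finType) (k : I) (F : I -> R) :
  \sum_a (a == k)%:R * F a = F k.
Proof. by rewrite (bigD1 k) //= eqxx mul1r big1 ?addr0 // => a /negPf->; rewrite mul0r. Qed.

Lemma sum_indicator_mulr (R : pzSemiRingType) (I : finType) (k : I) (F : I -> R) :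
  \sum_a F a * (a == k)%:R = F k.
Proof. by rewrite (bigD1 k) //= eqxx mulr1 big1 ?addr0 // => a /negPf->; rewrite mulr0. Qed.

Section Cone.
Variables (R : comPzRingType) (n r : nat) (v : 'I_n).

Definition cone_mx : 'M[R]_n :=
  \matrix_(a, k) (((a == k)%:R + (a == v)%:R) * (k < r)%N%:R).

Lemma mulmx_coneE (M : 'M[R]_n) a l : (M *m cone_mx) a l = (M a l + M a v) * (l < r)%N%:R.
Proof.
rewrite mxE; under eq_bigr do rewrite mxE mulrA mulrDr.
by rewrite -big_distrl big_split /= !sum_indicator_mulr.
Qed.

Lemma tr_cone_mulmxE (M : 'M[R]_n) k b : (cone_mx^T *m M) k b = (k < r)%N%:R * (M k b + M v b).
Proof.
rewrite mxE; under eq_bigr do rewrite !mxE mulrAC mulrDl.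
by rewrite -big_distrl big_split /= !sum_indicator_mull mulrC.
Qed.

Lemma cone_conjE (Y : 'M[R]_n) k l :
  (cone_mx^T *m Y *m cone_mx) k l =
  (k < r)%N%:R * (l < r)%N%:R * (Y k l + Y k v + Y v l + Y v v).
Proof. by rewrite mulmx_coneE !tr_cone_mulmxE; ring. Qed.

Lemma cone_pid : cone_mx *m pid_mx r = cone_mx.
Proof. by apply/matrixP => a k; rewrite mulmx_pidE !mxE -mulrA -natrM mulnb andbb. Qed.

Lemma pid_cone : (r <= v)%N -> (pid_mx r : 'M[R]_n) *m cone_mx = pid_mx r.
Proof.
move=> le_rv; apply/matrixP => a k; rewrite pid_mulmxE !mxE.
have [lt_ar|] := ltnP a r; last by rewrite andbF mul0r.
have -> : (a == v) = false by apply: contraTF lt_ar => /eqP->; rewrite -leqNgt.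
by rewrite addr0 mul1r andbT (inj_eq val_inj); case: eqP => [<-|_]; rewrite ?lt_ar ?mul0r ?mulr1.
Qed.

End Cone.

Definition clique_mx (R : pzSemiRingType) n m : 'M[R]_n :=
  \matrix_(i, j) [&& i != j, (i < m)%N & (j < m)%N]%:R.

Section CliqueExample.
Variables (R : realType) (n r : nat).
Hypothesis lt_rn : (r < n)%N.

Let v : 'I_n := Ordinal lt_rn.
Let val_v : nat_of_ord v = r. Proof. by []. Qed.
Let le_rv : (r <= v)%N. Proof. by rewrite val_v. Qed.

Local Notation E := (pid_mx r : 'M[R]_n).
Local Notation J := (ones_block R n r).
Local Notation U := (cone_mx R r v).
Local Notation H := (clique_mx R n r.+1).
Let T := 3%:R *: J - E.
Let c : R := 3%:R / (3%:R * r%:R - 1).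
Let S := c *: J - E.
Let A := U *m S *m U^T.

Let lt_v (k : 'I_n) : (k < r)%N -> (k == v) = false.
Proof. by move=> lt_kr; apply: contraTF lt_kr => /eqP->; rewrite ltnn. Qed.

Let TE k l : T k l = (k < r)%N%:R * (l < r)%N%:R * (3%:R - (k == l)%:R).
Proof.
rewrite !mxE -(inj_eq val_inj).
by case: eqP => [<-|_]; case: (k < r)%N; case: (l < r)%N; rewrite /= ?andbF; lra.
Qed.

Let c_r : 3%:R * c * r%:R = 3%:R + c :> R.
Proof.
have r3_nz : 3%:R * r%:R - 1 != 0 :> R.
  have [->|r_gt0] := posnP r; first by rewrite mulr0 sub0r oppr_eq0 oner_eq0.
  have r_ge1 : 1 <= r%:R :> R by rewrite ler1n.
  by rewrite gt_eqF //; lra.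
by rewrite /c; field.
Qed.

Let ES : E *m S = S. Proof. by rewrite mulmxBr -scalemxAr pid_ones_block pid_mx_idem. Qed.
Let SE : S *m E = S. Proof. by rewrite mulmxBl -scalemxAl ones_block_pid pid_mx_idem. Qed.
Let ET : E *m T = T. Proof. by rewrite mulmxBr -scalemxAr pid_ones_block pid_mx_idem. Qed.

Let TS : T *m S = E.
Proof.
rewrite mulmxBl !mulmxBr -!scalemxAl -!scalemxAr ones_block_mul ?(ltnW lt_rn) //.
rewrite ones_block_pid pid_ones_block pid_mx_idem !scalerA c_r.
by apply/matrixP => i j; rewrite !mxE; ring.
Qed.

Let ST : S *m T = E.
Proof.
rewrite mulmxBl !mulmxBr -!scalemxAl -!scalemxAr ones_block_mul ?(ltnW lt_rn) //.
rewrite ones_block_pid pid_ones_block pid_mx_idem !scalerA (mulrC c) c_r.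
by apply/matrixP => i j; rewrite !mxE; ring.
Qed.

Let pid_tr_cone : E *m U^T = U^T.
Proof. by rewrite -[E]tr_pid_mx -trmx_mul cone_pid. Qed.

Let tr_cone_pid : U^T *m E = E.
Proof. by rewrite -[E]tr_pid_mx -trmx_mul pid_cone. Qed.

Let pidA : E *m A = S *m U^T.
Proof. by rewrite !mulmxA pid_cone // ES. Qed.

Let Apid : A *m E = U *m S.
Proof. by rewrite -mulmxA tr_cone_pid -mulmxA SE. Qed.

Let pidApid : E *m A *m E = S.
Proof. by rewrite pidA -mulmxA tr_cone_pid SE. Qed.

Lemma cone_conj_clique : U^T *m H *m U = T.
Proof.
apply/matrixP => k l; rewrite cone_conjE TE.
have [lt_kr|] := ltnP k r; last by rewrite !mul0r.
have [lt_lr|] := ltnP l r; last by rewrite mulr0 !mul0r.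
rewrite !mxE lt_v // [v == l]eq_sym lt_v // (eqxx v) val_v !ltnS.
rewrite (ltnW lt_kr) (ltnW lt_lr) leqnn /=.
by case: (k == l); rewrite /=; lra.
Qed.

Lemma clique_inner_inverse : A *m H *m A = A.
Proof.
have -> : A *m H *m A = U *m (S *m (U^T *m H *m U) *m S) *m U^T by rewrite !mulmxA.
by rewrite cone_conj_clique ST ES.
Qed.

Lemma mxrank_cone_conj : \rank A = r.
Proof.
have rank_S : \rank S = r by apply: mxrank_eq_pid ES ST; exact: ltnW.
apply/eqP; rewrite eqn_leq; apply/andP; split.
  by rewrite -rank_S; apply: leq_trans (mxrankM_maxl _ _) (mxrankM_maxr _ _).
by rewrite -{1}rank_S -pidApid; apply: leq_trans (mxrankM_maxl _ _) (mxrankM_maxr _ _).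
Qed.

Lemma cone_conj_of_inner_inverse (Y : 'M[R]_n) : A *m Y *m A = A -> U^T *m Y *m U = T.
Proof.
move=> AYA; apply: (inner_inverse_unique ST TS ET).
  by rewrite !mulmxA pid_tr_cone -mulmxA cone_pid.
have -> : S *m (U^T *m Y *m U) *m S = E *m A *m Y *m (A *m E) by rewrite pidA Apid !mulmxA.
have -> : E *m A *m Y *m (A *m E) = E *m (A *m Y *m A) *m E by rewrite !mulmxA.
by rewrite AYA pidApid.
Qed.

Lemma clique_unique (Y : 'M[R]_n) :
    Y^T = Y -> (forall i j, H i j = 0 -> Y i j = 0) -> U^T *m Y *m U = T -> Y = H.
Proof.
move=> /matrixP Y_sym Y_supp /matrixP UYU.
have Yji i j : Y j i = Y i j by rewrite -Y_sym mxE.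
have Y_diag i : Y i i = 0 by apply: Y_supp; rewrite mxE eqxx.
have Y_kv (k : 'I_n) : (k < r)%N -> Y k v = 1.
  move=> lt_kr; have := UYU k k.
  by rewrite cone_conjE TE lt_kr (Y_diag k) (Y_diag v) (Yji k v) eqxx /=; lra.
have Y_kl (k l : 'I_n) : (k < r)%N -> (l < r)%N -> k != l -> Y k l = 1.
  move=> lt_kr lt_lr /negPf ne_kl; have := UYU k l.
  by rewrite cone_conjE TE lt_kr lt_lr (Y_diag v) (Yji l v) !Y_kv // ne_kl /=; lra.
have eq_v (i : 'I_n) : (i <= r)%N -> (r <= i)%N -> i = v.
  by move=> le_ir le_ri; apply/val_inj/eqP; rewrite eqn_leq le_ir.
apply/matrixP => i j; have [/Y_supp -> //|] := eqVneq (H i j) 0.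
rewrite mxE pnatr_eq0 eqb0 negbK !ltnS => /and3P[ne_ij le_ir le_jr].
rewrite ne_ij le_ir le_jr /=.
have [lt_ir|/(eq_v i le_ir) i_v] := ltnP i r; have [lt_jr|/(eq_v j le_jr) j_v] := ltnP j r.
- exact: Y_kl.
- by rewrite j_v Y_kv.
- by rewrite i_v Yji Y_kv.
- by rewrite i_v j_v eqxx in ne_ij.
Qed.

Lemma feas_sym_bound_attained :
  exists A : 'M[R]_n, A^T = A /\ \rank A = r /\
    exists P, extreme_point (feas_sym A) P /\ nnz (P.1 - P.2) = (r ^ 2 + r)%N.
Proof.
exists A; split.
  by rewrite !trmx_mul trmxK linearB /= linearZ /= tr_ones_block tr_pid_mx mulmxA.
split; first exact: mxrank_cone_conj.
have H_ge0 i j : 0 <= H i j by rewrite mxE ler0n.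
have H_sym : H^T = H.
  by apply/matrixP => i j; rewrite !mxE eq_sym [(j < r.+1)%N && _]andbC.
exists (H, 0); split.
  apply: extreme_point_of_unique_support.
  - by move=> P [[_ P_ge0] _].
  - split; last by split; rewrite ?trmx0.
    split; first by rewrite subr0 clique_inner_inverse.
    by split=> i j; rewrite ?mxE.
  - move=> Y [[AYA _] [Y_sym _]] Y_supp; rewrite subr0 in AYA.
    exact: clique_unique Y_sym Y_supp (cone_conj_of_inner_inverse AYA).
have -> : (r ^ 2 + r = r.+1 * r.+1 - r.+1)%N by rewrite mulSn addKn mulnS addnC mulnn.
rewrite /nnz subr0 -(card_offdiag_block lt_rn).
by apply: eq_card => k; rewrite !inE mxE pnatr_eq0 eqb0 negbK.
Qed.

End CliqueExample.

Theorem proposition2p1 (R : realType) :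
  (* (1) bound *)
  (forall (n : nat) (A : 'M[R]_n), A^T = A ->
     forall P, extreme_point (feas_gen A) P -> (nnz (P.1 - P.2) <= (\rank A) ^ 2)%N)
  /\
  (* (1) sharpness, for all n >= r >= 1 *)
  (forall (n r : nat), (1 <= r)%N -> (r <= n)%N ->
     exists A : 'M[R]_n, A^T = A /\ \rank A = r /\
       exists P, extreme_point (feas_gen A) P /\ nnz (P.1 - P.2) = (r ^ 2)%N)
  /\
  (* (2) bound *)
  (forall (n : nat) (A : 'M[R]_n), A^T = A ->
     forall P, extreme_point (feas_sym A) P -> (nnz (P.1 - P.2) <= (\rank A) ^ 2 + \rank A)%N)
  /\
  (* (2) sharpness, for n - 2 >= r >= 3 *)
  (forall (n r : nat), (3 <= r)%N -> (r + 2 <= n)%N ->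
     exists A : 'M[R]_n, A^T = A /\ \rank A = r /\
       exists P, extreme_point (feas_sym A) P /\ nnz (P.1 - P.2) = (r ^ 2 + r)%N).
Proof.
split.
  by move=> n A _ P ext; apply: leq_trans (nnz_sub_le_supp P) (card_supp_extreme_feas_gen ext).
split; first by move=> n r _; exact: feas_gen_bound_attained.
split.
  move=> n A A_sym P ext.
  by apply: leq_trans (nnz_sub_le_supp P) (card_supp_extreme_feas_sym A_sym ext).
by move=> n r _ le_r2n; apply: feas_sym_bound_attained; lia.
Qed.
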